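(* For every linear operator $T$ in $H$, the essential numerical range $W_e(T)$ is closed and convex, and $\operatorname{conv}\sigma_e(T)\subset W_e(T)$.
   Context: $H$ is a separable infinite-dimensional complex Hilbert space; operators need not be closed, closable or densely defined. $W_e(T)=\{\lambda\in\mathbb C:\exists x_n\in\operatorname{dom}(T),\|x_n\|=1,x_n\stackrel{w}{\to}0,\langle Tx_n,x_n\rangle\to\lambda\}$ and $\sigma_e(T)=\{\lambda:\exists x_n\in\operatorname{dom}(T),\|x_n\|=1,x_n\stackrel{w}{\to}0,\|(T-\lambda)x_n\|\to0\}$. *)

From HB Require Import structures.
From mathcomp Require Import all_boot all_order all_algebra.
From mathcomp Require Import complex.
From mathcomp Require Import reals.
Set Implicit Arguments. Unset Strict Implicit. Unset Printing Implicit Defensive.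
Import Order.TTheory GRing.Theory Num.Theory.
Local Open Scope ring_scope.
Local Open Scope complex_scope.

Definition cvgC (R : realType) (u : nat -> R[i]) (l : R[i]) : Prop :=
  forall e : R, 0 < e -> exists N : nat, forall n : nat, (N <= n)%N ->
    `|u n - l| < e%:C.

Record inner_product_space (R : realType) (V : lmodType R[i]) := IPS {
  ip : V -> V -> R[i];
  ip_linl : forall (a : R[i]) (x y z : V), ip (a *: x + y) z = a * ip x z + ip y z;
  ip_conj : forall x y : V, ip x y = (ip y x)^*;
  ip_ge0 : forall x : V, 0 <= ip x x;
  ip_eq0 : forall x : V, ip x x = 0 -> x = 0
}.

Definition is_hilbert_space (R : realType) (V : lmodType R[i])
    (S : inner_product_space V) : Prop :=
  (forall x : nat -> V,
     (forall e : R, 0 < e -> exists N : nat, forall m n : nat, (N <= m)%N -> (N <= n)%N ->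
        ip S (x m - x n) (x m - x n) < e%:C) ->
     exists l : V, cvgC (fun n => ip S (x n - l) (x n - l)) 0)
  /\ (exists d : nat -> V, forall (x : V) (e : R), 0 < e ->
        exists n : nat, ip S (x - d n) (x - d n) < e%:C)
  /\ (exists f : nat -> V, forall (n : nat) (c : nat -> R[i]),
        \sum_(i < n) c i *: f i = 0 -> forall i : nat, (i < n)%N -> c i = 0).

(* A linear operator T with domain dom (a linear subspace, not necessarily
   closed or dense); values of T off dom are irrelevant. *)
Definition linear_operator (R : realType) (V : lmodType R[i])
    (dom : V -> Prop) (T : V -> V) : Prop :=
  dom 0 /\
  (forall (a : R[i]) (x y : V), dom x -> dom y -> dom (a *: x + y)) /\
  (forall (a : R[i]) (x y : V), dom x -> dom y -> T (a *: x + y) = a *: T x + T y).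

Definition weak_to0 (R : realType) (V : lmodType R[i]) (S : inner_product_space V)
    (x : nat -> V) : Prop :=
  forall y : V, cvgC (fun n => ip S (x n) y) 0.

Definition W_e (R : realType) (V : lmodType R[i]) (S : inner_product_space V)
    (dom : V -> Prop) (T : V -> V) (lam : R[i]) : Prop :=
  exists x : nat -> V, (forall n, dom (x n)) /\ (forall n, ip S (x n) (x n) = 1) /\
    weak_to0 S x /\ cvgC (fun n => ip S (T (x n)) (x n)) lam.

(* Essential spectrum (in the sense of the paper): ||(T - lam) x_n|| -> 0 *)
Definition sigma_e (R : realType) (V : lmodType R[i]) (S : inner_product_space V)
    (dom : V -> Prop) (T : V -> V) (lam : R[i]) : Prop :=
  exists x : nat -> V, (forall n, dom (x n)) /\ (forall n, ip S (x n) (x n) = 1) /\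
    weak_to0 S x /\
    cvgC (fun n => ip S (T (x n) - lam *: x n) (T (x n) - lam *: x n)) 0.

Definition closedC (R : realType) (A : R[i] -> Prop) : Prop :=
  forall z : R[i], (forall e : R, 0 < e -> exists w, A w /\ `|z - w| < e%:C) -> A z.

Definition convexC (R : realType) (A : R[i] -> Prop) : Prop :=
  forall (z w : R[i]) (t : R), A z -> A w -> 0 <= t -> t <= 1 ->
    A (t%:C * z + (1 - t)%:C * w).

Definition convC (R : realType) (A : R[i] -> Prop) (z : R[i]) : Prop :=
  exists (n : nat) (t : 'I_n -> R) (p : 'I_n -> R[i]),
    (forall i, 0 <= t i) /\ \sum_(i < n) t i = 1 /\ (forall i, A (p i)) /\
    z = \sum_(i < n) (t i)%:C * p i.

From mathcomp Require Import all_boot all_order all_algebra complex reals.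
From mathcomp Require Import ring lra.
From mathcomp Require boolp.
Set Implicit Arguments.
Unset Strict Implicit.
Unset Printing Implicit Defensive.
Import Order.TTheory GRing.Theory Num.Theory.
Local Open Scope ring_scope.
Local Open Scope complex_scope.

(* Separability turns membership in W_e(T) into a finitary condition: z lies in
   W_e(T) iff for every e > 0 and every finite list s of vectors there is a unit
   vector x in dom T with |<x, y>| < e for y in s and |<Tx, x> - z| < e (a
   diagonal choice along a dense sequence rebuilds a weakly null sequence).  This
   condition is closed under limits, and it is convex: given witnesses x for
   lam and y for mu, with y also almost orthogonal to x and Tx, the cross term
   beta = <Ty, x> need not be small (T is unbounded and x was chosen first), but
   v = a x + b om y with |om| = 1, om beta a positive multiple of mu - lam and
   a, b >= 0, a^2 + b^2 = 1, a^2 - (|beta| / |lam - mu|) a b = t has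
   <Tv, v> close to t lam + (1 - t) mu; normalising v costs little.  Finally
   sigma_e(T) is in W_e(T) by Cauchy-Schwarz, and W_e(T) is convex. *)

Section ComplexNorm.
Variable R : rcfType.

Lemma conjcM (a b : R[i]) : (a * b)^* = a^*%C * b^*%C.
Proof. exact: rmorphM. Qed.

Lemma normr_add2_lt (p q : R[i]) (e : R) :
  `|p| < e%:C -> `|q| < e%:C -> `|p + q| < (2 * e)%:C.
Proof.
move=> pe qe; apply: le_lt_trans (ler_normD p q) _.
by rewrite mulr2n mulrDl mul1r rmorphD; apply: ltrD.
Qed.

Lemma normr_add3_lt (p q r : R[i]) (e : R) :
  `|p| < e%:C -> `|q| < e%:C -> `|r| < e%:C -> `|p + q + r| < (3 * e)%:C.
Proof.
move=> pe qe re; apply: le_lt_trans (ler_normD _ r) _.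
have -> : 3 * e = 2 * e + e by ring.
by rewrite rmorphD; apply: ltrD => //; apply: normr_add2_lt.
Qed.

Lemma normr_mul_le1 (a q : R[i]) : `|a| <= 1 -> `|a * q| <= `|q|.
Proof. by move=> a1; rewrite normrM ler_piMl. Qed.

Lemma normr_mulJ_le1 (a b : R[i]) :
  `|a| <= 1 -> `|b| <= 1 -> `|a * b^*%C| <= 1.
Proof. by move=> a1 b1; rewrite normrM normcJ mulr_ile1. Qed.

Lemma normr_realC (r : R) : `|r%:C| = `|r|%:C.
Proof. by rewrite normc_def /= expr0n /= addr0 sqrtr_sqr. Qed.

Lemma ge0_real_complex (z : R[i]) : 0 <= z -> exists2 r : R, 0 <= r & z = r%:C.
Proof.
by move=> z0; case/complex_realP: (ger0_real z0) (z0) => r -> r0; exists r; rewrite -?ler0c.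
Qed.

End ComplexNorm.

Section InnerProduct.
Variables (R : realType) (V : lmodType R[i]) (S : inner_product_space V).
Local Notation ip := (ip S).

Lemma ip0l (z : V) : ip 0 z = 0.
Proof.
have := ip_linl S 1 0 0 z; rewrite scaler0 addr0 mul1r => /eqP.
by rewrite -subr_eq subrr eq_sym => /eqP.
Qed.

Lemma ipZl (a : R[i]) (x z : V) : ip (a *: x) z = a * ip x z.
Proof. by have := ip_linl S a x 0 z; rewrite addr0 ip0l addr0. Qed.

Lemma ipDl (x y z : V) : ip (x + y) z = ip x z + ip y z.
Proof. by have := ip_linl S 1 x y z; rewrite scale1r mul1r. Qed.

Lemma ipBl (x y z : V) : ip (x - y) z = ip x z - ip y z.
Proof. by rewrite ipDl -scaleN1r ipZl mulN1r. Qed.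

Lemma ipZr (a : R[i]) (x z : V) : ip z (a *: x) = a^*%C * ip z x.
Proof. by rewrite ip_conj ipZl conjcM -ip_conj. Qed.

Lemma ipDr (x y z : V) : ip z (x + y) = ip z x + ip z y.
Proof. by rewrite ip_conj ipDl rmorphD /= -!ip_conj. Qed.

Lemma ipBr (x y z : V) : ip z (x - y) = ip z x - ip z y.
Proof. by rewrite ip_conj ipBl rmorphB /= -!ip_conj. Qed.

Lemma ip0r (z : V) : ip z 0 = 0.
Proof. by rewrite ip_conj ip0l conjc0. Qed.

Lemma ip_combination (a b : R[i]) (x y x' y' : V) :
  ip (a *: x + b *: y) (a *: x' + b *: y') =
  a * a^*%C * ip x x' + a * b^*%C * ip x y' + b * a^*%C * ip y x' + b * b^*%C * ip y y'.
Proof. rewrite ipDl !ipDr !ipZl !ipZr; ring. Qed.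

Lemma normr_ipC (x y : V) : `|ip x y| = `|ip y x|.
Proof. by rewrite ip_conj normcJ. Qed.

Lemma cauchy_schwarz (x y : V) : `|ip x y| ^+ 2 <= ip x x * ip y y.
Proof.
have [y0|yn0] := eqVneq (ip y y) 0.
  by rewrite y0 mulr0 (ip_eq0 y0) ip0r normr0 expr0n.
have y_gt0 : 0 < ip y y by rewrite lt_def yn0 ip_ge0.
set c := ip x y.
have := ip_ge0 S (x - (c / ip y y) *: y).
rewrite ipBl !ipBr !ipZl !ipZr conjcM conjc_inv -!ip_conj -/c (ip_conj S y x) -/c.
have -> : ip x x - c^*%C / ip y y * c - (c / ip y y * c^*%C - c / ip y y * (c^*%C / ip y y * ip y y))
   = ip x x - c * c^*%C / ip y y by field; rewrite gt_eqF.
by rewrite sqr_normc subr_ge0 ler_pdivrMr.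
Qed.

Lemma normr_ip_lt (x y : V) (e : R) :
  0 < e -> ip x x = 1 -> ip y y < (e ^+ 2)%:C -> `|ip x y| < e%:C.
Proof.
move=> e_gt0 x1 ye; rewrite -(ltr_pXn2r (n := 2)) ?nnegrE ?normr_ge0 ?ler0c ?(ltW e_gt0) //.
have -> : e%:C ^+ 2 = (e ^+ 2)%:C by rewrite rmorphXn.
by apply: le_lt_trans (cauchy_schwarz x y) _; rewrite x1 mul1r.
Qed.

End InnerProduct.

Definition eventually (P : nat -> Prop) : Prop :=
  exists N, forall n, (N <= n)%N -> P n.

Lemma eventuallyI (P Q : nat -> Prop) :
  eventually P -> eventually Q -> eventually (fun n => P n /\ Q n).
Proof.
move=> [M hP] [N hQ]; exists (maxn M N) => n; rewrite geq_max => /andP[nM nN].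
by split; [apply: hP | apply: hQ].
Qed.

Lemma eventually_in (T : eqType) (s : seq T) (P : T -> nat -> Prop) :
  {in s, forall y, eventually (P y)} -> eventually (fun n => {in s, forall y, P y n}).
Proof.
elim: s => [_|y s IH Ps]; first by exists 0%N.
have [M hy] := Ps y (mem_head y s).
have [N hs] := IH (fun z zs => Ps z (mem_behead (s := y :: s) zs)).
exists (maxn M N) => n; rewrite geq_max => /andP[nM nN] z.
by rewrite inE => /predU1P[->|zs]; [apply: hy | apply: hs].
Qed.

Lemma eventually_inv_lt (R : realType) (e : R) :
  0 < e -> eventually (fun k => (k.+1%:R)^-1 < e).
Proof.
move=> e_gt0; exists (Num.Def.archi_bound e^-1) => k k_ge.
have bound : e^-1 < (Num.Def.archi_bound e^-1)%:R.
  by apply: archi_boundP; rewrite invr_ge0 ltW.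
by rewrite invf_plt ?posrE ?ltr0n //; apply: lt_le_trans bound _; rewrite ler_nat leqW.
Qed.

Section LinearOperator.
Variables (R : realType) (V : lmodType R[i]) (dom : V -> Prop) (T : V -> V).
Hypothesis HT : linear_operator dom T.

Lemma linop_domZ (a : R[i]) (x : V) : dom x -> dom (a *: x).
Proof. by case: HT => d0 [dD _] dx; have := dD a x 0 dx d0; rewrite addr0. Qed.

Lemma linop_dom_comb (a b : R[i]) (x y : V) : dom x -> dom y -> dom (a *: x + b *: y).
Proof. by case: HT => _ [dD _] dx dy; apply/dD/linop_domZ. Qed.

Lemma linop0 : T 0 = 0.
Proof.
case: HT => d0 [_ TD]; have := TD 1 0 0 d0 d0; rewrite scaler0 addr0 scale1r => /eqP.
by rewrite -subr_eq subrr eq_sym => /eqP.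
Qed.

Lemma linopZ (a : R[i]) (x : V) : dom x -> T (a *: x) = a *: T x.
Proof. by case: HT => d0 [_ TD] dx; have := TD a x 0 dx d0; rewrite !addr0 linop0 addr0. Qed.

Lemma linop_comb (a b : R[i]) (x y : V) :
  dom x -> dom y -> T (a *: x + b *: y) = a *: T x + b *: T y.
Proof. by move=> dx dy; case: (HT) => _ [_ TD]; rewrite TD ?linopZ //; apply: linop_domZ. Qed.

End LinearOperator.

Section MixingCoefficients.
Variable R : rcfType.

Lemma exists_circle_point (rho k : R) : 0 <= rho -> k ^+ 2 <= 1 ->
  exists c s : R, [/\ c ^+ 2 + s ^+ 2 = 1, 0 <= s & c - rho * s = k].
Proof.
move=> rho0 k1.
have q_gt0 : 0 < 1 + rho ^+ 2 by rewrite ltr_pwDl // sqr_ge0.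
set D := 1 + rho ^+ 2 - k ^+ 2.
have D0 : 0 <= D by rewrite /D; nra.
have sD2 : Num.sqrt D ^+ 2 = D by rewrite sqr_sqrtr.
have rk_le : rho * k <= Num.sqrt D.
  have [rk0|rk_gt0] := lerP (rho * k) 0; first exact: le_trans rk0 (sqrtr_ge0 _).
  by rewrite -(ler_pXn2r (n := 2)) ?nnegrE ?sqrtr_ge0 ?(ltW rk_gt0) // sD2 /D; nra.
exists ((k + rho * Num.sqrt D) / (1 + rho ^+ 2)), ((Num.sqrt D - rho * k) / (1 + rho ^+ 2)).
split; last by field; rewrite gt_eqF.
- rewrite !expr_div_n -mulrDl.
  have -> : (k + rho * Num.sqrt D) ^+ 2 + (Num.sqrt D - rho * k) ^+ 2 = (1 + rho ^+ 2) ^+ 2.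
    by rewrite !sqrrD !exprMn !sqrrN sD2 /D; ring.
  by apply: divff; rewrite expf_eq0 gt_eqF.
- by rewrite divr_ge0 ?subr_ge0 // ltW.
Qed.

Lemma half_angle (c s : R) : c ^+ 2 + s ^+ 2 = 1 -> 0 <= s ->
  exists a b : R, [/\ 0 <= a, 0 <= b, a ^+ 2 + b ^+ 2 = 1, a ^+ 2 - b ^+ 2 = c
                    & 2 * (a * b) = s].
Proof.
move=> cs1 s0; have c1 : c ^+ 2 <= 1 by rewrite -cs1 lerDl sqr_ge0.
have c_ge : -1 <= c by nra.
have c_le : c <= 1 by nra.
exists (Num.sqrt ((1 + c) / 2)), (Num.sqrt ((1 - c) / 2)).
have a2 : Num.sqrt ((1 + c) / 2) ^+ 2 = (1 + c) / 2 by rewrite sqr_sqrtr //; lra.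
have b2 : Num.sqrt ((1 - c) / 2) ^+ 2 = (1 - c) / 2 by rewrite sqr_sqrtr //; lra.
split; rewrite ?sqrtr_ge0 ?a2 ?b2 //; try lra.
rewrite -sqrtrM; last lra.
have -> : (1 + c) / 2 * ((1 - c) / 2) = (s / 2) ^+ 2.
  by rewrite expr_div_n (_ : s ^+ 2 = 1 - c ^+ 2); [field | lra].
by rewrite sqrtr_sqr ger0_norm; [field | rewrite divr_ge0].
Qed.

Lemma exists_quadrant_level (rho t : R) : 0 <= rho -> 0 <= t <= 1 ->
  exists a b : R, [/\ 0 <= a, 0 <= b, a ^+ 2 + b ^+ 2 = 1 & a ^+ 2 - rho * (a * b) = t].
Proof.
move=> rho0 /andP[t0 t1].
have [c [s [cs1 s0 line]]] := @exists_circle_point rho (2 * t - 1) rho0 ltac:(nra).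
have [a [b [a0 b0 ab1 abc abs]]] := half_angle cs1 s0.
exists a, b; split => //.
have -> : rho * (a * b) = rho * s / 2 by rewrite -abs; field.
lra.
Qed.

Lemma exists_unimodular_rotation (beta u : R[i]) : `|u| = 1 ->
  exists2 om : R[i], `|om| = 1 & om * beta = `|beta| * u.
Proof.
move=> u1; have [->|beta0] := eqVneq beta 0.
  by exists 1; rewrite ?normr1 // mulr0 normr0 mul0r.
exists (u * `|beta| / beta); last by field.
by rewrite normrM normfV normrM normr_id u1 mul1r mulfV // normr_eq0.
Qed.

Lemma exists_mixing_coefficients (lam mu beta : R[i]) (t : R) :
  0 <= t <= 1 ->
  exists a g : R[i], [/\ `|a| <= 1, `|g| <= 1, a * a^*%C + g * g^*%C = 1 &
    a * a^*%C * lam + g * g^*%C * mu + g * a^*%C * beta = t%:C * lam + (1 - t)%:C * mu].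
Proof.
move=> t01; have [<-|lam_mu] := eqVneq lam mu.
  exists 1, 0; rewrite normr1 normr0 conjc1 mul0r !mulr1 addr0 ler01; split => //.
  by rewrite rmorphB rmorph1; ring.
have w0 : `|lam - mu| != 0 by rewrite normr_eq0 subr_eq0.
have [rho rho0 rhoE] := ge0_real_complex (divr_ge0 (normr_ge0 beta) (normr_ge0 (lam - mu))).
have [a [b [a0 b0 ab1 abt]]] := exists_quadrant_level rho0 t01.
have u1 : `|- (lam - mu) / `|lam - mu| | = 1 by rewrite normrM normrN normfV normr_id mulfV.
have [om om1 omb] := exists_unimodular_rotation beta u1.
have omJ : om * om^*%C = 1 by rewrite -sqr_normc om1 expr1n.
have a1 : a <= 1 by nra.
have b1 : b <= 1 by nra.
exists a%:C, (b%:C * om); rewrite conjcM !conjc_real normrM om1 mulr1 !normr_realC.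
rewrite !ger0_norm // !lecR; split => //.
  by rewrite mulrACA omJ mulr1 -!rmorphM -rmorphD -!expr2 ab1.
have -> : t%:C = a%:C * a%:C - rho%:C * (a%:C * b%:C).
  by rewrite -abt !(rmorphB, rmorphM, rmorphXn); ring.
have -> : (1 - t)%:C = b%:C * b%:C + rho%:C * (a%:C * b%:C).
  by rewrite -ab1 -abt !(rmorphB, rmorphD, rmorphM, rmorphXn); ring.
transitivity (a%:C * a%:C * lam + b%:C * b%:C * (om * om^*%C) * mu + a%:C * b%:C * (om * beta)).
  by ring.
by rewrite omJ omb -rhoE; field.
Qed.

End MixingCoefficients.

Lemma exists_normalizer (R : rcfType) (r : R) : `|r - 1| < 1 / 2 ->
  exists c : R, [/\ 0 < c, c * c * r = 1 & c * c <= 2].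
Proof.
move=> r1; have r_ge : 1 / 2 <= r by have := ler_norm (1 - r); rewrite distrC; lra.
have r_gt0 : 0 < r by lra.
exists (Num.sqrt r)^-1; rewrite -expr2 exprVn (sqr_sqrtr (ltW r_gt0)) mulVf ?gt_eqF //.
rewrite invr_gt0 sqrtr_gt0 r_gt0 -[2](invrK 2) lef_pV2 ?posrE ?invr_gt0 //; split=> //; lra.
Qed.

Section Approximation.
Variables (R : realType) (V : lmodType R[i]) (S : inner_product_space V).
Variables (dom : V -> Prop) (T : V -> V).
Hypothesis HT : linear_operator dom T.
Local Notation ip := (ip S).

Definition We_witness (e : R) (s : seq V) (z : R[i]) (x : V) : Prop :=
  [/\ dom x, {in s, forall y, `|ip x y| < e%:C} & `|ip (T x) x - z| < e%:C].

Definition We_approx (z : R[i]) : Prop :=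
  forall (e : R) (s : seq V), 0 < e -> exists2 x, ip x x = 1 & We_witness e s z x.

Lemma We_approx_of_We z : W_e S dom T z -> We_approx z.
Proof.
move=> [x [x_dom [x1 [x_weak xz]]]] e s e_gt0.
have x_small : {in s, forall y, eventually (fun n => `|ip (x n) y - 0| < e%:C)}.
  by move=> y _; apply: x_weak.
have [N xN] := eventuallyI (eventually_in x_small) (xz e e_gt0).
have [xs xzN] := xN N (leqnn N).
by exists (x N) => //; split => // y /xs; rewrite subr0.
Qed.

Lemma sigma_e_sub_We z : sigma_e S dom T z -> W_e S dom T z.
Proof.
move=> [x [x_dom [x1 [x_weak xz]]]]; exists x; do 3!split => //; move=> e e_gt0.
have [N xN] := xz (e ^+ 2) (exprn_gt0 2 e_gt0).
exists N => n /xN; rewrite subr0 ger0_norm ?ip_ge0 // => small.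
have -> : ip (T (x n)) (x n) - z = ip (T (x n) - z *: x n) (x n) by rewrite ipBl ipZl x1 mulr1.
by rewrite normr_ipC; apply: normr_ip_lt.
Qed.

Lemma We_approx_closed : closedC We_approx.
Proof.
move=> z z_lim e s e_gt0.
have e2_gt0 : 0 < e / 2 by rewrite divr_gt0.
have [w [wW zw]] := z_lim _ e2_gt0.
have [x x1 [x_dom xs xw]] := wW _ s e2_gt0.
exists x => //; split => // [y /xs|].
  by move/lt_le_trans; apply; rewrite lecR; lra.
rewrite -(subrK w (ip (T x) x)) -addrA (splitr e) rmorphD.
by apply: le_lt_trans (ler_normD _ _) _; rewrite ltrD // distrC.
Qed.

Lemma We_approx_normalize z :
  (forall e s, 0 < e -> exists2 x, `|ip x x - 1| < e%:C & We_witness e s z x) ->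
  We_approx z.
Proof.
move=> z_approx e s e_gt0.
have [nz nz0 znz] := ge0_real_complex (normr_ge0 z).
pose d := Num.min (1 / 2) (e / (2 * (1 + nz))).
have nz1 : 0 < 1 + nz by rewrite ltr_pwDl.
have d_gt0 : 0 < d by rewrite lt_min !divr_gt0 ?mulr_gt0.
have d_half : d <= 1 / 2 by rewrite ge_min lexx.
have d_e : 2 * d * (1 + nz) <= e.
  have : d <= e / (2 * (1 + nz)) by rewrite ge_min lexx orbT.
  by rewrite ler_pdivlMr ?mulr_gt0 //; nra.
have [x x1 [x_dom xs xz]] := z_approx d s d_gt0.
have [r r0 xr] := ge0_real_complex (ip_ge0 S x).
have r1 : `|r - 1| < d by move: x1; rewrite xr -ltcR -normr_realC rmorphB rmorph1.
have [c [c_gt0 ccr cc2]] := exists_normalizer (lt_le_trans r1 d_half).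
exists (c%:C *: x).
  by rewrite ipZl ipZr conjc_real xr mulrA -!rmorphM ccr.
split; first by apply: (linop_domZ HT).
  move=> y /xs xy; rewrite ipZl normrM normr_realC (ger0_norm (ltW c_gt0)).
  apply: (@lt_le_trans _ _ (c * d)%:C); first by rewrite rmorphM ltr_pM2l // (ltcR 0).
  by rewrite lecR; nra.
have ccrC : (c * c)%:C * r%:C = 1 by rewrite -rmorphM ccr.
rewrite (linopZ HT _ x_dom) ipZl ipZr conjc_real mulrA -rmorphM.
have -> : (c * c)%:C * ip (T x) x - z = (c * c)%:C * (ip (T x) x - z + (1 - r)%:C * z).
  by rewrite -[in LHS](mulr1 z) -ccrC rmorphB rmorph1; ring.
rewrite normrM normr_realC (ger0_norm (mulr_ge0 (ltW c_gt0) (ltW c_gt0))).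
apply: (@lt_le_trans _ _ ((c * c) * (d + d * nz))%:C); last by rewrite lecR; nra.
rewrite [X in _ < X]rmorphM ltr_pM2l ?(ltcR 0) ?mulr_gt0 //.
apply: le_lt_trans (ler_normD _ _) _; rewrite [X in _ < X]rmorphD ltr_leD //.
by rewrite normrM normr_realC znz -rmorphM lecR ler_wpM2r // distrC ltW.
Qed.

Lemma We_witness_comb e s lam mu x y (a g : R[i]) :
  ip x x = 1 -> ip y y = 1 ->
  We_witness e s lam x -> We_witness e (x :: T x :: s) mu y ->
  `|a| <= 1 -> `|g| <= 1 ->
  `|ip (a *: x + g *: y) (a *: x + g *: y) - (a * a^*%C + g * g^*%C)| < (3 * e)%:C /\
  We_witness (3 * e) s (a * a^*%C * lam + g * g^*%C * mu + g * a^*%C * ip (T y) x)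
    (a *: x + g *: y).
Proof.
move=> x1 y1 [x_dom xs xlam] [y_dom ys ymu] a1 g1.
have yx : `|ip y x| < e%:C by apply: ys; rewrite mem_head.
have yTx : `|ip y (T x)| < e%:C by apply: ys; rewrite !inE eqxx orbT.
have e_gt0 : 0 < e by rewrite -(ltcR 0); exact: le_lt_trans (normr_ge0 _) yx.
have two_three : (2 * e)%:C <= (3 * e)%:C by rewrite lecR; lra.
have ag1 := normr_mulJ_le1 a1 g1; have ga1 := normr_mulJ_le1 g1 a1.
split; [|split].
- rewrite ip_combination x1 y1 !mulr1.
  have -> : a * a^*%C + a * g^*%C * ip x y + g * a^*%C * ip y x + g * g^*%C
      - (a * a^*%C + g * g^*%C) = a * g^*%C * ip x y + g * a^*%C * ip y x by ring.
  apply: lt_le_trans two_three; apply: normr_add2_lt.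
    by apply: le_lt_trans (normr_mul_le1 _ ag1) _; rewrite normr_ipC.
  exact: le_lt_trans (normr_mul_le1 _ ga1) _.
- by apply: (linop_dom_comb HT).
- move=> d ds; rewrite ipDl !ipZl; apply: lt_le_trans two_three; apply: normr_add2_lt.
    exact: le_lt_trans (normr_mul_le1 _ a1) (xs d ds).
  by apply: le_lt_trans (normr_mul_le1 _ g1) (ys d _); rewrite !inE ds !orbT.
- rewrite (linop_comb HT) // ip_combination.
  have -> : a * a^*%C * ip (T x) x + a * g^*%C * ip (T x) y + g * a^*%C * ip (T y) x
      + g * g^*%C * ip (T y) y - (a * a^*%C * lam + g * g^*%C * mu + g * a^*%C * ip (T y) x)
    = a * a^*%C * (ip (T x) x - lam) + a * g^*%C * ip (T x) y
      + g * g^*%C * (ip (T y) y - mu) by ring.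
  apply: normr_add3_lt.
  - exact: le_lt_trans (normr_mul_le1 _ (normr_mulJ_le1 a1 a1)) xlam.
  - by apply: le_lt_trans (normr_mul_le1 _ ag1) _; rewrite normr_ipC.
  - exact: le_lt_trans (normr_mul_le1 _ (normr_mulJ_le1 g1 g1)) ymu.
Qed.

Lemma We_approx_convex : convexC We_approx.
Proof.
move=> lam mu t lamW muW t0 t1; apply: We_approx_normalize => e s e_gt0.
have e3_gt0 : 0 < e / 3 by rewrite divr_gt0.
have [x x1 xW] := lamW _ s e3_gt0.
have [y y1 yW] := muW _ (x :: T x :: s) e3_gt0.
have t01 : 0 <= t <= 1 by rewrite t0 t1.
have [a [g [a1 g1 ag1 agz]]] := exists_mixing_coefficients lam mu (ip (T y) x) t01.
have [] := We_witness_comb x1 y1 xW yW a1 g1.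
by rewrite ag1 agz mulrC divfK ?pnatr_eq0 //; exists (a *: x + g *: y).
Qed.

Variable d : nat -> V.
Hypothesis d_dense : forall (x : V) (e : R), 0 < e -> exists n, ip (x - d n) (x - d n) < e%:C.

Lemma We_of_We_approx z : We_approx z -> W_e S dom T z.
Proof.
move=> zW.
have tol_gt0 (k : nat) : 0 < (k.+1%:R : R)^-1 by rewrite invr_gt0 ltr0n.
have witness k : exists x, ip x x = 1 /\ We_witness (k.+1%:R)^-1 [seq d j | j <- iota 0 k] z x.
  by have [x x1 xW] := zW _ [seq d j | j <- iota 0 k] (tol_gt0 k); exists x.
have [x xW] := boolp.choice witness.
exists x; split; first by move=> k; have [_ []] := xW k.
split; first by move=> k; have [] := xW k.
split=> [y e e_gt0|e e_gt0].
  have e2_gt0 : 0 < e / 2 by rewrite divr_gt0.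
  have [j yj] := d_dense y (exprn_gt0 2 e2_gt0).
  have [K Ke] := eventually_inv_lt e2_gt0.
  exists (maxn K j.+1) => k; rewrite geq_max => /andP[kK kj].
  have [x1 [_ xs _]] := xW k.
  rewrite subr0 -(subrK (d j) y) ipDr (splitr e) rmorphD.
  apply: le_lt_trans (ler_normD _ _) _; apply: ltrD; first exact: normr_ip_lt.
  apply: lt_trans (xs _ (map_f _ _)) _; first by rewrite mem_iota.
  by rewrite ltcR Ke.
have [K Ke] := eventually_inv_lt e_gt0.
exists K => k kK; have [_ [_ _ xz]] := xW k.
by apply: lt_trans xz _; rewrite ltcR Ke.
Qed.

Lemma closedC_We : closedC (W_e S dom T).
Proof.
move=> z z_lim; apply/We_of_We_approx/We_approx_closed => e /z_lim[w [wW zw]].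
by exists w; split=> //; apply: We_approx_of_We.
Qed.

Lemma convexC_We : convexC (W_e S dom T).
Proof.
move=> lam mu t /We_approx_of_We lamW /We_approx_of_We muW t0 t1.
exact/We_of_We_approx/We_approx_convex.
Qed.

End Approximation.

Lemma convC_sub_convex (R : realType) (A B : R[i] -> Prop) :
  convexC B -> (forall z, A z -> B z) -> forall z, convC A z -> B z.
Proof.
move=> B_convex AB z [n [t [p [t0 [t1 [pA ->]]]]]].
elim: n t p t0 t1 pA => [|n IH] t p t0 t1 pA.
  by move: t1; rewrite big_ord0 => /eqP; rewrite eq_sym oner_eq0.
rewrite big_ord_recr /=; rewrite big_ord_recr /= in t1.
set s := \sum_(i < n) t (widen_ord (leqnSn n) i) in t1 *.
have s0 : 0 <= s by apply: sumr_ge0.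
have [s_eq0|s_neq0] := eqVneq s 0.
  have t_eq0 (i : 'I_n) : t (widen_ord (leqnSn n) i) = 0.
    by move/eqP: s_eq0; rewrite psumr_eq0 // => /allP/(_ i (mem_index_enum _))/eqP.
  rewrite big1 ?add0r => [|i _]; last by rewrite t_eq0 mul0r.
  have -> : t ord_max = 1 by rewrite -t1 s_eq0 add0r.
  by rewrite mul1r; apply/AB/pA.
pose t' (i : 'I_n) := t (widen_ord (leqnSn n) i) / s.
have B_rest : B (\sum_(i < n) (t' i)%:C * p (widen_ord (leqnSn n) i)).
  apply: IH => [i||i]; [exact: divr_ge0 | by rewrite -mulr_suml divff | exact: pA].
have s1 : s <= 1 by have := t0 ord_max; lra.
have := B_convex _ _ s B_rest (AB _ (pA ord_max)) s0 s1.
rewrite (_ : 1 - s = t ord_max); last by lra.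
rewrite mulr_sumr; congr (B (_ + _)); apply: eq_bigr => i _.
by rewrite mulrA -rmorphM /t' mulrCA divff // mulr1.
Qed.

Theorem proposition2p2 (R : realType) (V : lmodType R[i])
    (S : inner_product_space V) (HS : is_hilbert_space S)
    (dom : V -> Prop) (T : V -> V) (HT : linear_operator dom T) :
  closedC (W_e S dom T) /\ convexC (W_e S dom T) /\
  (forall z : R[i], convC (sigma_e S dom T) z -> W_e S dom T z).
Proof.
have [_ [[d d_dense] _]] := HS.
have W_convex := convexC_We HT d_dense.
split; first exact: closedC_We d_dense.
split=> //.
exact: convC_sub_convex W_convex (@sigma_e_sub_We _ _ S dom T).
Qed.
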